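(* Let $\Delta=0$ be a passive orthonomic system as described in the context. For $j\in\{1,\dots,p\}$ consider the recursive schema \[ \mathfrak{D}_j=\frac{\partial}{\partial x_j}+\sum_{(k,L)\in\mathcal{S}_{e_j}}u^k_{L+e_j}\frac{\partial}{\partial u^k_L}+\sum_{(k,L)\in\mathcal{S}\setminus\mathcal{S}_{e_j}}\mathfrak{D}_M P^\alpha\,\frac{\partial}{\partial u^k_L}, \] where in the last sum, for $(k,L)\in\mathcal{S}\setminus\mathcal{S}_{e_j}$, $\alpha$ and $M$ are chosen with $(k,L+e_j)=(i^\alpha,J^\alpha+M)$, and $\mathfrak{D}_M=\mathfrak{D}_1^{M_1}\cdots\mathfrak{D}_p^{M_p}$ is evaluated by applying the same schema recursively. This recursive schema is well defined: for every $Q\in\mathcal{B}$ the evaluation of $\mathfrak{D}_jQ$ by the schema terminates.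
   Context: Jet space: coordinates $x_1,\dots,x_p$, $u^1,\dots,u^q$ and derivatives $u^j_K$, $K\in\mathbb{N}^p$ a multi-index; $e_i$ is the $i$-th unit multi-index. $\mathcal{A}$ is the ring of smooth functions of finitely many coordinates. Total derivatives $D_i=\partial/\partial x_i+\sum_{j,K}u^j_{K+e_i}\,\partial/\partial u^j_K$, $D_K=D_1^{K_1}\cdots D_p^{K_p}$. Choose $n$ pairs $(i^\alpha,J^\alpha)\in\{1,\dots,q\}\times\mathbb{N}^p$, $J^\alpha\neq0$. $u^j_K$ is principal if $(j,K)=(i^\alpha,J^\alpha+L)$ for some $\alpha,L$, otherwise parametric. $\mathcal{S}$ is the set of $(j,K)$ with $u^j_K$ parametric, and for $L\in\mathbb{N}^p$, $\mathcal{S}_L=\{(k,K):(k,K+L)\in\mathcal{S}\}$ (a subset of $\mathcal{S}$). $\mathcal{B}\subset\mathcal{A}$ consists of functions of the $x_i$ and parametric derivatives only. Fix a ranking $\le$: a total order on $\{1,\dots,q\}\times\mathbb{N}^p$ with $(j,K)\le(j,K+L)$ and $(i,J)\le(j,K)\iff(i,J+L)\le(j,K+L)$. The system is $u^{i^\alpha}_{J^\alpha}=P^\alpha$, $P^\alpha\in\mathcal{B}$, with $\Delta^\alpha=u^{i^\alpha}_{J^\alpha}-P^\alpha$; it is passive orthonomic if (i) $P^\alpha$ depends only on $u^j_K$ with $(j,K)<(i^\alpha,J^\alpha)$, and (ii) $(i^\alpha,J^\alpha+K)=(i^\beta,J^\beta+L)$ implies $D_KP^\alpha=D_LP^\beta$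 (modulo the system). Each $Q\in\mathcal{A}$ then has a unique reduced form $\widetilde{Q}\in\mathcal{B}$ congruent to $Q$ modulo the differential ideal generated by the $\Delta^\alpha$; the intrinsic operators are $\mathfrak{D}_KP=\widetilde{D_KP}$ for $P\in\mathcal{B}$, and the displayed schema is the formula these satisfy. *)

From HB Require Import structures.
From mathcomp Require Import all_boot all_order all_algebra.
From mathcomp Require Import boolp classical_sets reals topology normedtype derive.
Set Implicit Arguments. Unset Strict Implicit. Unset Printing Implicit Defensive.
Import Order.TTheory GRing.Theory Num.Theory numFieldNormedType.Exports.
Local Open Scope ring_scope.

(* u-coordinates u^j_K (j : 'I_q, K : N^p).  Indices are 0-based.      *)
Definition mi (p : nat) := {ffun 'I_p -> nat}.
Definition mi_add p (K L : mi p) : mi p := [ffun k => (K k + L k)%N].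
Definition mi_zero p : mi p := [ffun => 0%N].
Definition unit_mi p (i : 'I_p) : mi p := [ffun k => nat_of_bool (k == i)].

Definition jet_ucoord (p q : nat) := ('I_q * mi p)%type.
Definition jet_coord (p q : nat) := ('I_p + jet_ucoord p q)%type.
Definition Xc p q (i : 'I_p) : jet_coord p q := inl i.
Definition Uc p q (j : 'I_q) (K : mi p) : jet_coord p q := inr (j, K).

(* The list of indices realising D_M = D_1^{M_1} ... D_p^{M_p}:
   [1,...,1 (M_1 times), ..., p,...,p (M_p times)]; the head of the
   list is the outermost operator (applied last). *)
Definition mi_seq p (M : mi p) : seq 'I_p :=
  flatten [seq nseq (M i) i | i <- enum 'I_p].

Definition is_ranking p q (rle : jet_ucoord p q -> jet_ucoord p q -> Prop) : Prop :=
  (forall a, rle a a) /\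
  (forall a b, rle a b -> rle b a -> a = b) /\
  (forall a b c, rle a b -> rle b c -> rle a c) /\
  (forall a b, rle a b \/ rle b a) /\
  (forall j K L, rle (j, K) (j, mi_add K L)) /\
  (forall i J j K L, rle (i, J) (j, K) <-> rle (i, mi_add J L) (j, mi_add K L)).

Section Jet.
Variables (R : realType) (p q : nat).

Notation point := (jet_coord p q -> R).
Notation fn := (point -> R).

Definition upd (y : point) (c : jet_coord p q) (t : R) : point :=
  fun c' => if c' == c then t else y c'.

Definition pd (c : jet_coord p q) (f : fn) : fn :=
  fun y => derive1 (fun t => f (upd y c t)) (y c).

Definition iter_pd (cs : seq (jet_coord p q)) (f : fn) : fn := foldr pd f cs.

Definition depends_only (f : fn) (F : seq (jet_coord p q)) : Prop :=
  forall y y' : point, (forall c, c \in F -> y c = y' c) -> f y = f y'.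

Definition cont_on (F : seq (jet_coord p q)) (f : fn) : Prop :=
  forall (y : point) (e : R), 0 < e -> exists d : R, 0 < d /\
    forall y' : point, (forall c, c \in F -> `|y' c - y c| < d) ->
      `|f y' - f y| < e.

Definition smooth_on (F : seq (jet_coord p q)) (f : fn) : Prop :=
  forall cs : seq (jet_coord p q),
    (forall c (y : point), derivable (fun t => iter_pd cs f (upd y c t)) (y c) 1)
    /\ cont_on F (iter_pd cs f).

Definition inA (f : fn) : Prop :=
  exists F, depends_only f F /\ smooth_on F f.

Variables (n : nat) (ia : 'I_n -> 'I_q) (Ja : 'I_n -> mi p) (P : 'I_n -> fn).

Definition principal (a : jet_ucoord p q) : Prop :=
  exists (al : 'I_n) (L : mi p), a = (ia al, mi_add (Ja al) L).
Definition inS (a : jet_ucoord p q) : Prop := ~ principal a.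
Definition inS_shift (L : mi p) (a : jet_ucoord p q) : Prop :=
  inS (a.1, mi_add a.2 L).

Definition x_or_param (c : jet_coord p q) : Prop :=
  match c with inl _ => True | inr a => inS a end.

Definition inB (f : fn) : Prop :=
  exists F, [/\ depends_only f F, smooth_on F f & forall c, c \in F -> x_or_param c].

Definition Delta (al : 'I_n) : fn := fun y => y (Uc (ia al) (Ja al)) - P al y.

Definition td_term (i : 'I_p) (f : fn) (y : point) (c : jet_coord p q) : R :=
  match c with
  | inl _ => 0
  | inr (j, K) => y (Uc j (mi_add K (unit_mi i))) * pd c f y
  end.

(* TD i f g : g = D_i f  (F is any duplicate-free list of coordinates
   on which f depends; the result does not depend on that choice) *)
Definition TD (i : 'I_p) (f g : fn) : Prop :=
  exists F, [/\ uniq F, depends_only f F &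
    g = (fun y => pd (@Xc p q i) f y + \sum_(c <- F) td_term i f y c)].

Inductive TDseq : seq 'I_p -> fn -> fn -> Prop :=
| TDseq0 f : TDseq [::] f f
| TDseqS i s f f' g : TDseq s f f' -> TD i f' g -> TDseq (i :: s) f g.

Definition TDK (K : mi p) (f g : fn) : Prop := TDseq (mi_seq K) f g.

Definition diff_ideal (I : fn -> Prop) : Prop :=
  [/\ (forall f, I f -> inA f),
      I (fun _ => 0),
      (forall f g, I f -> I g -> I (fun y => f y + g y)),
      (forall a f, inA a -> I f -> I (fun y => a y * f y)) &
      (forall i f g, I f -> TD i f g -> I g)].

Definition in_gen_ideal (f : fn) : Prop :=
  forall I, diff_ideal I -> (forall al, I (Delta al)) -> I f.

Variable rle : jet_ucoord p q -> jet_ucoord p q -> Prop.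
Definition rlt (a b : jet_ucoord p q) : Prop := rle a b /\ a <> b.

Definition orthonomic_i : Prop :=
  forall al, exists F, depends_only (P al) F /\
    forall c, c \in F -> match c with
                         | inl _ => True
                         | inr a => rlt a (ia al, Ja al)
                         end.

Definition passive_ii : Prop :=
  forall (al be : 'I_n) (K L : mi p),
    (ia al, mi_add (Ja al) K) = (ia be, mi_add (Ja be) L) ->
    exists g1 g2, [/\ TDK K (P al) g1, TDK L (P be) g2 &
                      in_gen_ideal (fun y => g1 y - g2 y)].

(* (k,L) in S and the term with d/du^k_L actually occurs in frak{D}_j Q,
   i.e. dQ/du^k_L is not identically zero *)
Definition occurs (Q : fn) (c : jet_coord p q) : Prop :=
  match c with
  | inl _ => False
  | inr a => inS a /\ exists y, pd c Q y <> 0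
  end.

Definition schema_term (j : 'I_p) (g : jet_coord p q -> fn) (Q : fn) (y : point)
    (c : jet_coord p q) : R :=
  match c with
  | inl _ => 0
  | inr (k, L) =>
      (if `[< inS_shift (unit_mi j) (k, L) >]
       then y (Uc k (mi_add L (unit_mi j))) else g c y) * pd c Q y
  end.

(* Eval j Q Rs : some run of the schema computing frak{D}_j Q terminates
   with value Rs;  EvalSeq s Q Rs : same for frak{D}_{s_1}(...frak{D}_{s_m} Q) *)
Inductive Eval : 'I_p -> fn -> fn -> Prop :=
| EvalI (j : 'I_p) (Q Rs : fn) (F : seq (jet_coord p q)) (g : jet_coord p q -> fn) :
    uniq F ->
    (forall c, c \in F <-> occurs Q c) ->
    (forall k L, Uc k L \in F -> ~ inS_shift (unit_mi j) (k, L) ->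
       exists al M, (k, mi_add L (unit_mi j)) = (ia al, mi_add (Ja al) M) /\
                    EvalSeq (mi_seq M) (P al) (g (Uc k L))) ->
    Rs = (fun y => pd (@Xc p q j) Q y + \sum_(c <- F) schema_term j g Q y c) ->
    Eval j Q Rs
with EvalSeq : seq 'I_p -> fn -> fn -> Prop :=
| EvalSeq0 Q : EvalSeq [::] Q Q
| EvalSeqS i s Q Q' Rs : EvalSeq s Q Q' -> Eval i Q' Rs -> EvalSeq (i :: s) Q Rs.

(* Term j Q : the evaluation of frak{D}_j Q by the schema terminates,
   whatever choices of alpha and M are made along the way (well-founded
   tree of recursive calls). *)
Inductive Term : 'I_p -> fn -> Prop :=
| TermI (j : 'I_p) (Q : fn) :
    (forall k L al M, occurs Q (Uc k L) -> ~ inS_shift (unit_mi j) (k, L) ->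
       (k, mi_add L (unit_mi j)) = (ia al, mi_add (Ja al) M) ->
       TermSeq (mi_seq M) (P al)) ->
    Term j Q
with TermSeq : seq 'I_p -> fn -> Prop :=
| TermSeq0 Q : TermSeq [::] Q
| TermSeqS i s Q : TermSeq s Q -> (forall Q', EvalSeq s Q Q' -> Term i Q') ->
    TermSeq (i :: s) Q.

End Jet.

From HB Require Import structures.
From mathcomp Require Import all_boot all_order all_algebra.
From mathcomp Require Import boolp classical_sets reals topology normedtype derive.
From mathcomp Require Import zify.
Set Implicit Arguments. Unset Strict Implicit. Unset Printing Implicit Defensive.

(* A ranking is a well-order: by Dickson's lemma any sequence of labels
   (k, K) contains two terms (k, K) and (k, K + L), the later one ranked
   above the earlier, so no sequence strictly decreases.  Well-founded
   induction on the label d = (k, L + e_j) then shows that, for Q depending on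
   finitely many x's and derivatives ranked below (k, L), every run of the
   schema for D_j Q terminates with a result depending on finitely many
   coordinates ranked below d.  Indeed a recursive call D_M P^a with
   (i^a, J^a + M) = (k', L' + e_j) and (k', L') < (k, L) applies D_M to P^a,
   which by condition (i) lives below (i^a, J^a); its successive steps stay
   at or below (i^a, J^a + M) < d. *)

Lemma exists_argmin_gt (g : nat -> nat) (m : nat) :
  exists n, m < n /\ forall n', m < n' -> g n <= g n'.
Proof.
have exv : exists v, `[< exists2 n, m < n & g n = v >].
  by exists (g m.+1); apply/asboolP; exists m.+1.
case: (ex_minnP exv) => v /asboolP[n mn <-] minv; exists n; split => // n' mn'.
by apply: minv; apply/asboolP; exists n'.
Qed.

Lemma nondecreasing_subseq (g : nat -> nat) : exists psi : nat -> nat,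
  (forall k, psi k < psi k.+1) /\ forall k, g (psi k) <= g (psi k.+1).
Proof.
have [nxt nxt_spec] := choice (exists_argmin_gt g).
have nxt_gt m : m < nxt m by case: (nxt_spec m).
exists (fun k => iter k.+1 nxt 0); split=> k /=; first exact: nxt_gt.
by case: (nxt_spec (iter k nxt 0)) => _; apply; apply: ltn_trans (nxt_gt _).
Qed.

Lemma subseq_nondecreasing (X : Type) (I : eqType) (h : I -> X -> nat)
    (f : nat -> X) (s : seq I) :
  exists phi : nat -> nat, (forall k, phi k < phi k.+1) /\
    forall i, i \in s -> forall k, h i (f (phi k)) <= h i (f (phi k.+1)).
Proof.
elim: s => [|i s [phi [phi_incr phi_mono]]]; first by exists id.
have [psi [psi_incr psi_mono]] := nondecreasing_subseq (fun k => h i (f (phi k))).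
have phi_lt := homo_ltn ltn_trans phi_incr.
exists (phi \o psi); split=> [k|i']; first exact: phi_lt.
rewrite in_cons => /orP[/eqP-> //| i's] k.
apply: (homo_leq leqnn leq_trans (phi_mono i' i's)).
exact/ltnW/psi_incr.
Qed.

Lemma not_Acc_descending (T : Type) (r : T -> T -> Prop) (a : T) :
  ~ Acc r a -> exists s : nat -> T, forall k, r (s k.+1) (s k).
Proof.
move=> na.
have step (x : {b | ~ Acc r b}) : exists y : {b | ~ Acc r b}, r (sval y) (sval x).
  case: x => b nb; apply: contrapT => nstep; apply: (nb); constructor => b' rb'.
  by apply: contrapT => nb'; apply: nstep; exists (exist _ b' nb').
have [nxt nxt_r] := choice step.
by exists (fun k => sval (iter k nxt (exist _ a na))) => k; exact: nxt_r.
Qed.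

Lemma mi_addA (p : nat) (A B C : mi p) :
  mi_add (mi_add A B) C = mi_add A (mi_add B C).
Proof. by apply/ffunP => k; rewrite !ffunE addnA. Qed.

Lemma mi_add0 (p : nat) (K : mi p) : mi_add K (mi_zero p) = K.
Proof. by apply/ffunP => k; rewrite !ffunE addn0. Qed.

Lemma mi_addIr (p : nat) (L A B : mi p) : mi_add A L = mi_add B L -> A = B.
Proof.
by move=> /ffunP eqAB; apply/ffunP => k; have := eqAB k; rewrite !ffunE => /addIn.
Qed.

Lemma mi_add_unit_neq (p : nat) (K : mi p) (i : 'I_p) : mi_add K (unit_mi i) <> K.
Proof. by move=> /ffunP/(_ i); rewrite !ffunE eqxx addn1 => /eqP; rewrite eqn_leq ltnn. Qed.

Definition mi_of_seq (p : nat) (s : seq 'I_p) : mi p :=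
  foldr (fun i K => mi_add K (unit_mi i)) (mi_zero p) s.

Lemma mi_of_seqK (p : nat) (M : mi p) : mi_of_seq (mi_seq M) = M.
Proof.
have count_mi s k : mi_of_seq s k = count_mem k s.
  by elim: s => [|i s IH] /=; rewrite !ffunE // IH addnC eq_sym.
apply/ffunP => k; rewrite count_mi /mi_seq count_flatten sumnE !big_map.
under eq_bigr => i _ do rewrite count_nseq.
rewrite -enumT big_enum /= (bigD1 k) //= eqxx mul1n big1 ?addn0 // => i /negbTE.
by rewrite eq_sym => ->.
Qed.

Definition ushift (p q : nat) (a : jet_ucoord p q) (L : mi p) : jet_ucoord p q :=
  (a.1, mi_add a.2 L).

Lemma ucoord_dickson (p q : nat) (s : nat -> jet_ucoord p q) :
  exists i j L, i < j /\ s j = ushift (s i) L.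
Proof.
pose h (x : 'I_p + bool) (a : jet_ucoord p q) :=
  match x with inl k => a.2 k | inr true => val a.1 | inr false => q - val a.1 end.
have [phi [phi_incr phi_mono]] := subseq_nondecreasing h s (enum predT).
have mono x := phi_mono x (mem_enum _ x) 0.
set a := s (phi 0) in mono *; set b := s (phi 1) in mono *.
exists (phi 0), (phi 1), [ffun k => b.2 k - a.2 k]; split; first exact: phi_incr.
(* monotonicity in both [val a.1] and [q - val a.1] forces equality *)
have eq1 : b.1 = a.1.
  apply: val_inj; have := mono (inr true); have := mono (inr false).
  by have := ltn_ord a.1; have := ltn_ord b.1; rewrite /=; lia.
rewrite /ushift -/a -/b -eq1; apply: injective_projections => //=.
by apply/ffunP => k; rewrite !ffunE subnKC //; apply: (mono (inl k)).
Qed.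

Section Ranking.
Variables (p q : nat) (rle : jet_ucoord p q -> jet_ucoord p q -> Prop).
Hypothesis rank : is_ranking rle.

Lemma rle_refl a : rle a a.
Proof. by have [refl _] := rank. Qed.

Lemma rle_anti a b : rle a b -> rle b a -> a = b.
Proof. by have [_ [anti _]] := rank; exact: anti. Qed.

Lemma rle_trans a b c : rle a b -> rle b c -> rle a c.
Proof. by have [_ [_ [trans _]]] := rank; exact: trans. Qed.

Lemma rle_total a b : rle a b \/ rle b a.
Proof. by have [_ [_ [_ [total _]]]] := rank. Qed.

Lemma rle_ushift a L : rle a (ushift a L).
Proof. by have [_ [_ [_ [_ [le_shift _]]]]] := rank; case: a => j K; exact: le_shift. Qed.

Lemma rle_rlt_trans a b c : rle a b -> rlt rle b c -> rlt rle a c.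
Proof.
move=> ab [bc nbc]; split=> [|eac]; first exact: rle_trans bc.
by subst c; exact/nbc/rle_anti.
Qed.

Lemma rlt_rle_trans a b c : rlt rle a b -> rle b c -> rlt rle a c.
Proof.
move=> [ab nab] bc; split=> [|eac]; first exact: rle_trans bc.
by subst c; exact/nab/rle_anti.
Qed.

Lemma rlt_trans a b c : rlt rle a b -> rlt rle b c -> rlt rle a c.
Proof. by case=> ab _; apply: rle_rlt_trans. Qed.

Lemma rlt_ushift_unit a (i : 'I_p) : rlt rle a (ushift a (unit_mi i)).
Proof. by split; [exact: rle_ushift | case: a => j K [] /esym/mi_add_unit_neq]. Qed.

Lemma rlt_ushift a b L : rlt rle a b -> rlt rle (ushift a L) (ushift b L).
Proof.
have [_ [_ [_ [_ [_ shift]]]]] := rank; case: a => i J; case: b => j K [ab nab].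
split=> [|[eij /mi_addIr eJK]]; first exact: (proj1 (shift _ _ _ _ _)).
by apply: nab; rewrite eij eJK.
Qed.

Lemma rlt_wf : well_founded (rlt rle).
Proof.
move=> a; apply: contrapT => /(@not_Acc_descending _ (rlt rle) a)[s s_desc].
have s_lt := @homo_ltn _ s (fun x y => rlt rle y x)
  (fun _ _ _ xy yz => rlt_trans yz xy) s_desc.
have [i [j [L [ij sj]]]] := ucoord_dickson s.
have [le_ji ne_ji] := s_lt _ _ ij.
by apply: ne_ji; apply: rle_anti le_ji _; rewrite sj; exact: rle_ushift.
Qed.

Lemma ranking_upper_bound (a0 : jet_ucoord p q) (l : seq (jet_ucoord p q)) :
  exists c, forall a, a \in l -> rle a c.
Proof.
elim: l => [|a l [c lc]]; first by exists a0.
have [ac|ca] := rle_total a c.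
  by exists c => b; rewrite in_cons => /orP[/eqP-> //|/lc].
exists a => b; rewrite in_cons => /orP[/eqP->|/lc bc]; first exact: rle_refl.
exact: rle_trans bc ca.
Qed.

End Ranking.

Local Open Scope ring_scope.

Section Dependence.
Variables (R : realType) (p q : nat).
Local Notation point := (jet_coord p q -> R).
Local Notation fn := (point -> R).

Lemma pd_eq0 (f : fn) (F : seq (jet_coord p q)) c y :
  depends_only f F -> c \notin F -> pd c f y = 0.
Proof.
move=> fF cF; rewrite /pd (_ : (fun t => f (upd y c t)) = fun=> f y).
  exact: (@derive1_cst R R^o).
apply/funext => t; apply: fF => c' c'F; rewrite /upd.
by case: eqP => // ec; move: cF; rewrite -ec c'F.
Qed.

Lemma depends_only_pd (f : fn) (F : seq (jet_coord p q)) c :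
  depends_only f F -> depends_only (pd c f) F.
Proof.
move=> fF y y' yF; have [cF|cF] := boolP (c \in F).
  2: by rewrite !(pd_eq0 _ fF cF).
rewrite /pd (yF c cF) (_ : (fun t => f (upd y c t)) = fun t => f (upd y' c t)) //.
apply/funext => t; apply: fF => c' c'F.
by rewrite /upd; case: eqP => // _; exact: yF.
Qed.

Variable rle : jet_ucoord p q -> jet_ucoord p q -> Prop.

Definition below (d : jet_ucoord p q) (c : jet_coord p q) : Prop :=
  if c is inr a then rlt rle a d else True.

Definition bounded (d : jet_ucoord p q) (f : fn) : Prop :=
  exists F, depends_only f F /\ forall c, c \in F -> below d c.

Lemma bounded_mono d d' (f : fn) :
  is_ranking rle -> rle d d' -> bounded d f -> bounded d' f.
Proof.
move=> rank dd' [F [fF Fd]]; exists F; split=> // -[//|a] /Fd /= ad.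
exact: rlt_rle_trans ad dd'.
Qed.

Lemma bounded_cst d (r : R) : bounded d (fun=> r).
Proof. by exists [::]. Qed.

Lemma bounded_coord d c : below d c -> bounded d (fun y : point => y c).
Proof.
by move=> dc; exists [:: c]; split=> [y y' -> |c']; rewrite ?mem_head // inE => /eqP->.
Qed.

Lemma bounded_pd d c (f : fn) : bounded d f -> bounded d (pd c f).
Proof. by move=> [F [fF Fd]]; exists F; split=> //; exact: depends_only_pd. Qed.

Lemma bounded_op2 (op : R -> R -> R) d (f g : fn) :
  bounded d f -> bounded d g -> bounded d (fun y => op (f y) (g y)).
Proof.
move=> [F [fF Fd]] [G [gG Gd]]; exists (F ++ G); split.
  move=> y y' yFG; rewrite (fF y y') ?(gG y y') // => c cX; apply: yFG.
    by rewrite mem_cat cX orbT.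
  by rewrite mem_cat cX.
by move=> c; rewrite mem_cat => /orP[/Fd|/Gd].
Qed.

Lemma bounded_sum (T : eqType) d (l : seq T) (h : T -> fn) :
  (forall x, x \in l -> bounded d (h x)) ->
  bounded d (fun y => \sum_(x <- l) h x y).
Proof.
elim: l => [|x l IH] hl.
  by under [fun y => _]funext => y do rewrite big_nil; exact: bounded_cst.
under [fun y => _]funext => y do rewrite big_cons.
apply: bounded_op2; first by apply: hl; rewrite mem_head.
by apply: IH => x' x'l; apply: hl; rewrite in_cons x'l orbT.
Qed.

End Dependence.

Section Schema.
Variables (R : realType) (p q n : nat) (ia : 'I_n -> 'I_q) (Ja : 'I_n -> mi p).
Variables (P : 'I_n -> (jet_coord p q -> R) -> R).
Local Notation fn := ((jet_coord p q -> R) -> R).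
Local Notation occurs := (occurs ia Ja).
Local Notation Eval := (Eval ia Ja P).
Local Notation EvalSeq := (EvalSeq ia Ja P).
Local Notation Term := (Term ia Ja P).
Local Notation TermSeq := (TermSeq ia Ja P).

Lemma occurs_mem (Q : fn) F c : depends_only Q F -> occurs Q c -> c \in F.
Proof.
move=> QF; case: c => [//|a] [_ [y pd_neq0]]; apply: contrapT => /negP cF.
exact/pd_neq0/(pd_eq0 _ QF cF).
Qed.

Lemma eval_exists j (Q : fn) F0 :
  depends_only Q F0 ->
  (forall k L al M, occurs Q (Uc k L) -> ~ inS_shift ia Ja (unit_mi j) (k, L) ->
     (k, mi_add L (unit_mi j)) = (ia al, mi_add (Ja al) M) ->
     exists Q', EvalSeq (mi_seq M) (P al) Q') ->
  exists Rs, Eval j Q Rs.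
Proof.
move=> QF0 calls.
pose F := [seq c <- undup F0 | `[< occurs Q c >]].
have memF c : c \in F <-> occurs Q c.
  rewrite mem_filter mem_undup; split=> [/andP[/asboolP //]|occ].
  by rewrite (occurs_mem QF0 occ) andbT; apply/asboolP.
have call_value (c : jet_coord p q) : exists Qc : fn, forall k L, c = Uc k L ->
    occurs Q c -> ~ inS_shift ia Ja (unit_mi j) (k, L) -> exists al M,
    (k, mi_add L (unit_mi j)) = (ia al, mi_add (Ja al) M) /\
    EvalSeq (mi_seq M) (P al) Qc.
  have [[k [L [-> [occ ns]]]]|none] := EM (exists k L, c = Uc k L /\ occurs Q c /\
                                       ~ inS_shift ia Ja (unit_mi j) (k, L)).
    have [al [M eqM]] : principal ia Ja (k, mi_add L (unit_mi j)) by apply: contrapT.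
    have [Q' run] := calls k L al M occ ns eqM.
    by exists Q' => _ _ [<- <-] _ _; exists al, M.
  (* no recursive call is made at [c]: any value will do *)
  by exists Q => k L ec occ ns; case: none; exists k, L.
have [g gP] := choice call_value.
eexists; apply: (@EvalI _ _ _ _ _ _ _ j Q _ F g) => //.
- by rewrite filter_uniq ?undup_uniq.
- by move=> k L /memF occ ns; exact: gP.
Qed.

Variable rle : jet_ucoord p q -> jet_ucoord p q -> Prop.
Hypothesis rank : is_ranking rle.
Local Notation bounded := (bounded rle).

Lemma occurs_below c (Q : fn) k L :
  bounded c Q -> occurs Q (Uc k L) -> rlt rle (k, L) c.
Proof. by move=> [F [QF Fc]] /(occurs_mem QF)/Fc. Qed.

Lemma eval_bounded j c (Q Rs : fn) :
  bounded c Q ->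
  (forall k L al M Q', rlt rle (k, L) c ->
     (k, mi_add L (unit_mi j)) = (ia al, mi_add (Ja al) M) ->
     EvalSeq (mi_seq M) (P al) Q' -> bounded (ushift (k, L) (unit_mi j)) Q') ->
  Eval j Q Rs -> bounded (ushift c (unit_mi j)) Rs.
Proof.
move=> Qc calls ev; inversion ev as [j' Q' Rs' F g _ memF gP eRs]; subst.
have [cd _] := rlt_ushift_unit rank c j.
have Qd := bounded_mono rank cd Qc.
have occ_d k L : occurs Q (Uc k L) ->
    rlt rle (ushift (k, L) (unit_mi j)) (ushift c (unit_mi j)).
  by move=> occ; exact: (rlt_ushift rank (unit_mi j) (occurs_below Qc occ)).
apply: bounded_op2; first exact: bounded_pd.
apply: bounded_sum => -[x|[k L]] /[dup] cF /memF occ /=; first exact: bounded_cst.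
apply: bounded_op2; last exact: bounded_pd.
case: asboolP => ns; first exact/bounded_coord/occ_d.
have [al [M [eqM run]]] := gP k L cF ns.
apply: bounded_mono rank (proj1 (occ_d k L occ)) _.
exact: calls (occurs_below Qc occ) eqM run.
Qed.

Definition schema_ok j (Q : fn) d : Prop :=
  [/\ Term j Q, exists Rs, Eval j Q Rs & forall Rs, Eval j Q Rs -> bounded d Rs].

Definition schema_seq_ok s (Q : fn) d : Prop :=
  [/\ TermSeq s Q, exists Q', EvalSeq s Q Q' &
      forall Q', EvalSeq s Q Q' -> bounded d Q'].

(* Indexed by the label d = c + e_j of the result rather than by c: the
   recursive calls made by D_j Q are ranked below d but not necessarily
   below c. *)
Definition schema_ok_at d : Prop :=
  forall j c (Q : fn), ushift c (unit_mi j) = d -> bounded c Q -> schema_ok j Q d.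

Lemma schema_seq_ok_of s a (Q : fn) :
  (forall d, rle d (ushift a (mi_of_seq s)) -> schema_ok_at d) ->
  bounded a Q -> schema_seq_ok s Q (ushift a (mi_of_seq s)).
Proof.
elim: s => [|i s IH] ok Qa.
  split=> [||Q' ev]; [exact: TermSeq0 | by exists Q; exact: EvalSeq0 |].
  by inversion ev; subst; rewrite /ushift mi_add0; case: (a) Qa.
set c := ushift a (mi_of_seq s).
have eq_d : ushift c (unit_mi i) = ushift a (mi_of_seq (i :: s)).
  by rewrite /c /ushift /= mi_addA.
have ok_c d : rle d c -> schema_ok_at d.
  move=> dc; apply: ok; rewrite -eq_d.
  exact: (rle_trans rank dc (rle_ushift rank c (unit_mi i))).
have [term_s [Qs run_s] bnd_s] := IH ok_c Qa.
have step Q' : EvalSeq s Q Q' -> schema_ok i Q' (ushift a (mi_of_seq (i :: s))).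
  by move=> /bnd_s Q'c; exact: (ok _ (rle_refl rank _) i c Q' eq_d Q'c).
split.
- by apply: TermSeqS => // Q' /step[].
- by have [_ [Rs ev] _] := step _ run_s; exists Rs; exact: EvalSeqS run_s ev.
- move=> Rs ev; inversion ev as [|i' s' Q0 Q' Rs' run ev']; subst.
  by have [_ _ bnd] := step _ run; exact: bnd ev'.
Qed.

Hypothesis orthonomic : orthonomic_i ia Ja P rle.

Lemma schema_ok_everywhere d : schema_ok_at d.
Proof.
elim/(well_founded_induction (rlt_wf rank)): d => d IH j c Q eq_d Qc; subst d.
have calls k L al M : rlt rle (k, L) c ->
    (k, mi_add L (unit_mi j)) = (ia al, mi_add (Ja al) M) ->
    schema_seq_ok (mi_seq M) (P al) (ushift (k, L) (unit_mi j)).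
  move=> kc eqM; have kd := rlt_ushift rank (unit_mi j) kc.
  have [F [PF Fbelow]] := orthonomic al.
  have := schema_seq_ok_of (s := mi_seq M) (a := (ia al, Ja al)) (Q := P al).
  rewrite mi_of_seqK /ushift /= -eqM; apply; last by exists F.
  by move=> d' d'k; apply: IH; exact: (rle_rlt_trans rank d'k kd).
have [F0 [QF0 _]] := Qc.
split.
- constructor=> k L al M occ _ eqM.
  by case: (calls k L al M (occurs_below Qc occ) eqM).
- apply: eval_exists QF0 _ => k L al M occ _ eqM.
  by case: (calls k L al M (occurs_below Qc occ) eqM).
- move=> Rs; apply: eval_bounded Qc _ => k L al M Q' kc eqM.
  by case: (calls k L al M kc eqM) => _ _; apply.
Qed.

End Schema.

Theorem proposition2 (R : realType) (p q n : nat)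
    (ia : 'I_n -> 'I_q) (Ja : 'I_n -> mi p)
    (P : 'I_n -> (jet_coord p q -> R) -> R)
    (rle : jet_ucoord p q -> jet_ucoord p q -> Prop) :
  (forall al, Ja al <> @mi_zero p) ->
  is_ranking rle ->
  (forall al, inB ia Ja (P al)) ->
  orthonomic_i ia Ja P rle ->
  passive_ii ia Ja P ->
  forall (j : 'I_p) (Q : (jet_coord p q -> R) -> R),
    inB ia Ja Q ->
    Term ia Ja P j Q /\ exists Rs, Eval ia Ja P j Q Rs.
Proof.
move=> _ rank _ orthonomic _ j Q [F [QF _ _]].
have [q0|q_gt0] := posnP q.
  have no_ucoord (k : 'I_q) : False by move: (ltn_ord k); rewrite {2}q0.
  split; first by constructor=> k; case: (no_ucoord k).
  by apply: eval_exists QF _ => k; case: (no_ucoord k).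
pose a0 : jet_ucoord p q := (Ordinal q_gt0, mi_zero p).
have [c Fc] := ranking_upper_bound rank a0 [seq if x is inr a then a else a0 | x <- F].
have Qc : bounded rle (ushift c (unit_mi j)) Q.
  exists F; split=> // -[//|a] aF /=.
  apply: (rle_rlt_trans rank _ (rlt_ushift_unit rank c j)); apply: Fc.
  by apply/mapP; exists (inr a).
by have [term ev _] := schema_ok_everywhere rank orthonomic (j := j) erefl Qc.
Qed.
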